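(* For any admissible $F$-weighted boundary stratum $\mathcal{S}$ of genus $g$, the RM-torus $T_\mathcal{S}$ has dimension at most $g-1$.
   Context: $F$ is a totally real number field of degree $g$ with trace pairing $\langle x,y\rangle=\mathrm{Tr}_{F/\mathbb{Q}}(xy)$. For a lattice $\mathcal{I}\subset F$ (rank $g$ additive subgroup), $\mathcal{I}^\vee=\{x\in F:\langle x,y\rangle\in\mathbb{Z}\ \forall y\in\mathcal{I}\}$. An $\mathcal{I}$-weighted stable curve is a stable curve of arithmetic genus $g$ and geometric genus $0$ with an element of $\mathcal{I}$ attached to each branch at each node, such that the two branches at a node have opposite weights, the weights on each component sum to zero, and the weights span $\mathcal{I}$ (''$F$-weighted'' = $\mathcal{I}$-weighted for some $\mathcal{I}$). An $F$-weighted boundary stratum $\mathcal{S}$ is the moduli space of weighted stable curves topologically equivalent (weight-preservingly) to a fixed one. $\mathrm{Sym}_{\mathbb{Q}}(F)\subset F\otimes_{\mathbb{Q}}F$ is the subspace of symmetric tensors, $\mathbf{S}_{\mathbb{Q}}(F)$ the quotient of $F\otimes_{\mathbb{Q}}F$ by the span of $x\otimes y-y\otimes x$ (and $\mathbf{S}_{\mathbb{Z}}(\mathcal{I}^\vee)$ the analogous quotient of $\mathcal{I}^\vee\otimes_{\mathbb{Z}}\mathcal{I}^\vee$), dual via $\langle a\otimes b,c\otimes d\rangle=\langle a,c\rangle\langle b,d\rangle$. $N(\mathcal{S})\subset\mathbf{S}_{\mathbb{Q}}(F)$ is the annihilator of the span of $r\otimes r$ over the weights $r$ of $\mathcal{S}$;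 $C(\mathcal{S})=\{x\in\mathbf{S}_{\mathbb{Q}}(F):\langle x,r\otimes r\rangle\ge 0\ \forall\text{ weights } r\}$. $\Lambda^1=\{x\in F\otimes_{\mathbb{Q}}F:\lambda x=x\lambda\ \forall\lambda\in F\}$ (for the natural $F$-bimodule structure), which lies in $\mathrm{Sym}_{\mathbb{Q}}(F)$, and $\mathrm{Ann}(\Lambda^1)\subset\mathbf{S}_{\mathbb{Q}}(F)$ is its annihilator. $\mathcal{S}$ is admissible if $C(\mathcal{S})\cap\mathrm{Ann}(\Lambda^1)\subset N(\mathcal{S})$. The ambient torus is $A_\mathcal{S}=\mathrm{Hom}_{\mathbb{Z}}(N(\mathcal{S})\cap\mathbf{S}_{\mathbb{Z}}(\mathcal{I}^\vee),\mathbb{G}_m)$, $p\colon A_\mathcal{S}\to\mathrm{Hom}(N(\mathcal{S})\cap\mathrm{Ann}(\Lambda^1)\cap\mathbf{S}_{\mathbb{Z}}(\mathcal{I}^\vee),\mathbb{G}_m)$ is the restriction map, and the RM-torus is $T_\mathcal{S}=p^{-1}(1)$, the kernel of $p$. *)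

From HB Require Import structures.
From mathcomp Require Import all_boot all_order all_algebra all_field.
Set Implicit Arguments. Unset Strict Implicit. Unset Printing Implicit Defensive.
Import Order.TTheory GRing.Theory Num.Theory.
Local Open Scope ring_scope.

Section RMTorus.
Variable F : fieldExtType rat.

Definition deg : nat := \dim {:F}.
Definition ebasis : deg.-tuple F := vbasis {:F}.

Definition totally_real : Prop :=
  forall (s : {rmorphism F -> algC}) (x : F), s x \is Num.real.

Definition coords (x : F) : 'rV[rat]_deg := \row_i coord ebasis i x.

(* matrix of multiplication by x (acting on coordinate row vectors) *)
Definition mulmx_of (x : F) : 'M[rat]_deg :=
  \matrix_(i, j) coord ebasis j (x * tnth ebasis i).

Definition trF (x : F) : rat := \tr (mulmx_of x).

(* F (x)_Q F is identified with 'M[rat]_deg via the basis e_i (x) e_j:     *)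
(* a (x) b  |->  (coords a)^T *m (coords b).  Under this identification   *)
(* the swap x(x)y |-> y(x)x is transposition.                             *)
Definition tens (a b : F) : 'M[rat]_deg := (coords a)^T *m coords b.

Definition gram : 'M[rat]_deg :=
  \matrix_(i, j) trF (tnth ebasis i * tnth ebasis j).

(* bilinear extension of <a(x)b, c(x)d> = <a,c><b,d> to F(x)F x F(x)F *)
Definition tpair (A B : 'M[rat]_deg) : rat :=
  \sum_i \sum_j \sum_k \sum_l A i j * B k l * gram i k * gram j l.

Definition symt (A : 'M[rat]_deg) : Prop := A^T = A.
(* span of x(x)y - y(x)x : antisymmetric tensors.  S_Q(F) = (F(x)F)/alt.  *)
(* A subset of S_Q(F) is represented by its (alt-saturated) preimage in   *)
(* F(x)F; the pairing of S_Q(F) with Sym_Q(F) is tpair on representatives.*)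
Definition altt (A : 'M[rat]_deg) : Prop := A^T = - A.

(*   lam.(a(x)b) = (lam a)(x)b ,  (a(x)b).lam = a(x)(b lam)                 *)
Definition lact (lam : F) (A : 'M[rat]_deg) := (mulmx_of lam)^T *m A.
Definition ract (lam : F) (A : 'M[rat]_deg) := A *m mulmx_of lam.

Definition Lambda1 (A : 'M[rat]_deg) : Prop := forall lam : F, lact lam A = ract lam A.

Definition AnnL1 (A : 'M[rat]_deg) : Prop := forall L, Lambda1 L -> tpair A L = 0.

Definition zspan (m : nat) (v : 'I_m -> F) (x : F) : Prop :=
  exists c : 'I_m -> int, x = \sum_i ((c i)%:~R : rat) *: v i.

Definition is_lattice (I : F -> Prop) : Prop :=
  exists b : deg.-tuple F, free b /\ forall x, I x <-> zspan (fun i => tnth b i) x.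

Definition dual_lattice (I : F -> Prop) (x : F) : Prop :=
  forall y, I y -> trF (x * y) \is a Num.int.

(* preimage in F(x)F of S_Z(I^v) \subset S_Q(F): image of I^v (x)_Z I^v  *)
(* (the Z-span of the a(x)b, a b in I^v), plus alt.                       *)
Definition SZ (I : F -> Prop) (A : 'M[rat]_deg) : Prop :=
  exists s : seq (F * F),
    (forall p, p \in s -> dual_lattice I p.1 /\ dual_lattice I p.2) /\
    altt (A - \sum_(p <- s) tens p.1 p.2).

(* Weighted stable curves of geometric genus 0, via their dual graphs.    *)
(* Vertices = irreducible components (all of geometric genus 0),          *)
(* half-edges = branches at nodes, hinv pairs the two branches of a node. *)
Record wgraph := WGraph {
  nV : nat;
  nH : nat;
  hvert : 'I_nH -> 'I_nV;
  hinv : 'I_nH -> 'I_nH;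
  wt : 'I_nH -> F }.

Definition adjacent (G : wgraph) : rel 'I_(nV G) :=
  fun u v => [exists h, (hvert h == u) && (hvert (hinv h) == v)].

Definition I_weighted_stable (I : F -> Prop) (g : nat) (G : wgraph) : Prop :=
  [/\ (* nodes: fixed-point-free involution on branches *)
      (forall h : 'I_(nH G), hinv (hinv h) = h) /\ (forall h : 'I_(nH G), hinv h != h),
      (0 < nV G)%N /\ (forall u v : 'I_(nV G), connect (@adjacent G) u v),
      (* arithmetic genus: #nodes - #components + 1 = g (all components rational) *)
      ((nH G %/ 2) + 1 = nV G + g)%N,
      (* stability: each rational component has >= 3 special points *)
      (forall v : 'I_(nV G), 3 <= #|[set h : 'I_(nH G) | hvert h == v]|)%N &
      [/\ forall h : 'I_(nH G), I (wt h),
          forall h : 'I_(nH G), wt (hinv h) = - wt h,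
          forall v : 'I_(nV G), \sum_(h : 'I_(nH G) | hvert h == v) wt h = 0 &
          forall x, I x <-> zspan (@wt G) x]].

Definition Nstr (G : wgraph) (A : 'M[rat]_deg) : Prop :=
  forall h : 'I_(nH G), tpair A (tens (wt h) (wt h)) = 0.
Definition Cstr (G : wgraph) (A : 'M[rat]_deg) : Prop :=
  forall h : 'I_(nH G), 0 <= tpair A (tens (wt h) (wt h)).

Definition admissible (G : wgraph) : Prop :=
  forall A, Cstr G A -> AnnL1 A -> Nstr G A.

(* quot_rank P d : for an alt-saturated P, the Q-span of its image in     *)
(* S_Q(F) = (F(x)F)/alt has dimension d; for a subgroup of S_Q(F) this is *)
(* its rank.                                                              *)
Definition span_dim (P : 'M[rat]_deg -> Prop) (d : nat) : Prop :=
  (exists s : seq 'M[rat]_deg, (forall A, A \in s -> P A) /\ free s /\ size s = d) /\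
  (forall s : seq 'M[rat]_deg, (forall A, A \in s -> P A) -> free s -> (size s <= d)%N).

Definition quot_rank (P : 'M[rat]_deg -> Prop) (d : nat) : Prop :=
  exists dP da, span_dim P dP /\ span_dim altt da /\ d = (dP - da)%N.

(* T_S = ker (Hom(X, G_m) -> Hom(X', G_m)) has character group X/X', so   *)
(* dim T_S = rank X - rank X'.                                            *)
Definition charX (I : F -> Prop) (G : wgraph) (A : 'M[rat]_deg) : Prop :=
  Nstr G A /\ SZ I A.
Definition charX' (I : F -> Prop) (G : wgraph) (A : 'M[rat]_deg) : Prop :=
  Nstr G A /\ AnnL1 A /\ SZ I A.

Definition RMtorus_dim (I : F -> Prop) (G : wgraph) (d : nat) : Prop :=
  exists rX rX', quot_rank (charX I G) rX /\ quot_rank (charX' I G) rX' /\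
                 d = (rX - rX')%N.

End RMTorus.

(* Let W be the span of the tensors r ⊗ r over the weights r of the stratum.
   Admissibility forces W ∩ Λ¹ ≠ 0: otherwise, with π the projection onto W along Λ¹,
   the functional B ↦ tr (π B) is represented through the nondegenerate trace pairing
   by an element of C(S) ∩ Ann(Λ¹), hence of N(S); this is absurd because tr (r ⊗ r)
   is the sum of the squares of the coordinates of r.  Every rational tensor has a
   nonzero integral multiple in S_Z(I^∨), so the character lattices X(A_S) ⊇ X' have
   the ranks of Ann(W) and Ann(W) ∩ Ann(Λ¹).  Pairing Ann(W) against a basis of Λ¹, a
   nonzero element of W ∩ Λ¹ gives a nontrivial linear relation, whence
   dim T_S = rank X - rank X' < dim Λ¹ ≤ g. *)

From HB Require Import structures.
From mathcomp Require Import all_boot all_order all_algebra all_field.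
From mathcomp Require Import ring zify.
Set Implicit Arguments. Unset Strict Implicit. Unset Printing Implicit Defensive.
Import Order.TTheory GRing.Theory Num.Theory.
Local Open Scope ring_scope.

Lemma mxtrace_linear_rep (R : comNzRingType) n (phi : {linear 'M[R]_n -> R^o}) :
  exists D : 'M[R]_n, forall B, phi B = \tr (D *m B).
Proof.
exists (\matrix_(j, i) phi (delta_mx i j)) => B.
rewrite {1}(matrix_sum_delta B) linear_sum /mxtrace.
under [RHS]eq_bigr => k _ do rewrite mxE.
rewrite exchange_big /=; apply: eq_bigr => i _; rewrite linear_sum; apply: eq_bigr => j _.
by rewrite linearZ !mxE /= mulrC.
Qed.

Section Annihilator.
Variables (K : fieldType) (vT : vectType K) (f : {biscalar vT}).

Definition pairing_row n (s : n.-tuple vT) (A : vT) : 'rV[K]_n := \row_j f A (tnth s j).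

Fact pairing_row_is_linear n s : linear (@pairing_row n s).
Proof. by move=> a A A'; apply/rowP => j; rewrite !mxE linearPl. Qed.
HB.instance Definition _ n s :=
  GRing.isLinear.Build K vT 'rV[K]_n _ (@pairing_row n s) (pairing_row_is_linear s).

Definition ann (U : {vspace vT}) : {vspace vT} := lker (linfun (pairing_row (vbasis U))).

Lemma pairing_sumr A n (c : 'I_n -> K) (B : 'I_n -> vT) :
  f A (\sum_i c i *: B i) = \sum_i c i * f A (B i).
Proof. by rewrite linear_sumr; apply: eq_bigr => i _; rewrite linearZr_LR. Qed.

Lemma memv_ann U A : A \in ann U <-> {in U, forall B, f A B = 0}.
Proof.
rewrite memv_ker lfunE; split => [/eqP/rowP h B /coord_vbasis -> | h].
  rewrite pairing_sumr big1 // => i _.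
  by have := h i; rewrite !mxE -tnth_nth => ->; rewrite mulr0.
by apply/eqP/rowP => j; rewrite !mxE h // vbasis_mem ?mem_tnth.
Qed.

Lemma memv_ann_span (s : seq vT) A : A \in ann <<s>> <-> {in s, forall B, f A B = 0}.
Proof.
split=> [/memv_ann h B /memv_span /h // | h]; apply/memv_ann => B B_s.
have B_t : B \in span (in_tuple s) by [].
rewrite (coord_span B_t) pairing_sumr big1 // => i _.
by rewrite h ?mulr0 //; apply: mem_nth.
Qed.

Lemma dim_ann_cap_lt W L :
  (W :&: L != 0)%VS -> (\dim (ann W) < \dim (ann W :&: ann L) + \dim L)%N.
Proof.
move=> WL_neq0; pose b := vbasis L; pose ev := linfun (pairing_row b).
have /memv_capP [L0W L0L] := memv_pick (W :&: L)%VS.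
set L0 := vpick _ in L0W L0L.
have [j cj_neq0] : exists j, coord b j L0 != 0.
  case: (pickP (fun j => coord b j L0 != 0)) => [j ? | c0]; first by exists j.
  move: WL_neq0; rewrite -vpick0 -/L0 (coord_vbasis L0L) big1 ?eqxx // => i _.
  by move/negbFE/eqP: (c0 i) => ->; rewrite scale0r.
(* The coordinates of [L0] give a nontrivial linear relation on [ev @: ann W]. *)
have ev_proper : (ev @: ann W)%VS != fullv.
  apply: contraTneq isT => ev_full.
  have /memv_imgP [A /memv_ann AannW evA] : delta_mx 0 j \in (ev @: ann W)%VS.
    by rewrite ev_full memvf.
  have evA_i i : f A (tnth b i) = (delta_mx 0 j : 'rV_(\dim L)) 0 i.
    by rewrite evA lfunE mxE.
  have := AannW L0 L0W; rewrite (coord_vbasis L0L) pairing_sumr (bigD1 j) //= big1.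
    by rewrite -tnth_nth evA_i !mxE !eqxx mulr1 addr0 => /eqP; rewrite (negbTE cj_neq0).
  by move=> i ij; rewrite -tnth_nth evA_i !mxE (negbTE ij) andbF mulr0.
rewrite -(limg_ker_dim ev (ann W)) ltn_add2l.
have := dimv_leqif_eq (subvf (ev @: ann W)); rewrite dimvf dim_matrix mul1r.
by move=> /ltn_leqif ->.
Qed.
End Annihilator.

Lemma daddv_pi_eq0 (K : fieldType) (vT : vectType K) (U V : {vspace vT}) v :
  (U :&: V = 0)%VS -> v \in V -> daddv_pi U V v = 0.
Proof.
move=> UV0 vV.
have vUV : v \in (U + V)%VS by apply: subvP vV; exact: addvSr.
have VU0 : (V :&: U = 0)%VS by rewrite capvC.
have := daddv_pi_add UV0 vUV; rewrite (daddv_pi_id VU0 vV).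
by move/(canRL (addrK v)); rewrite subrr.
Qed.

Section NumberField.
Variable F : fieldExtType rat.
Local Notation g := (deg F).
Local Notation e := (ebasis F).

Lemma ebasisP : basis_of fullv e. Proof. exact: vbasisP. Qed.

Lemma deg_gt0 : (0 < g)%N. Proof. exact: adim_gt0. Qed.

Lemma coordsK : cancel (@coords F) (passmx.vecof e).
Proof. exact: passmx.rVofK ebasisP. Qed.

Lemma vecofK : cancel (passmx.vecof e) (@coords F).
Proof. exact: passmx.vecofK ebasisP. Qed.

Lemma coords_ebasis i : coords (tnth e i) = delta_mx 0 i.
Proof. by rewrite (tnth_nth 0); exact: passmx.rVofE ebasisP i. Qed.

HB.instance Definition _ :=
  GRing.isLinear.Build rat F 'rV[rat]_g _ (@coords F) (passmx.rVof_linear e).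

Fact mulmx_of_is_linear : linear (@mulmx_of F).
Proof. by move=> a x y; apply/matrixP => i j; rewrite !mxE mulrDl -scalerAl linearP. Qed.
HB.instance Definition _ :=
  GRing.isLinear.Build rat F 'M[rat]_g _ (@mulmx_of F) mulmx_of_is_linear.

Fact trF_is_linear : linear (@trF F : F -> rat^o).
Proof. by move=> a x y; rewrite /trF linearP mxtraceD mxtraceZ. Qed.
HB.instance Definition _ := GRing.isLinear.Build rat F rat^o _ (@trF F) trF_is_linear.

Lemma trF1 : trF (1 : F) = g%:R.
Proof.
rewrite /trF -mxtrace1; congr (\tr _); apply/matrixP => i j.
by rewrite !mxE mul1r (tnth_nth 0) coord_free ?(basis_free ebasisP).
Qed.

Definition mul_formmx (phi : {linear F -> rat^o}) : 'M[rat]_g :=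
  \matrix_(i, j) phi (tnth e i * tnth e j).

Lemma mul_formmx_unit (phi : {linear F -> rat^o}) x0 :
  phi x0 != 0 -> mul_formmx phi \in unitmx.
Proof.
move=> phi_x0; rewrite -row_free_unit -kermx_eq0; apply/rowV0P => v /sub_kermxP v_ker.
pose x := passmx.vecof e v.
have phi_xe j : phi (x * tnth e j) = 0.
  have := congr1 (fun w : 'rV_g => w 0 j) v_ker; rewrite !mxE => <-.
  rewrite mulr_suml linear_sum; apply: eq_bigr => i _.
  by rewrite -scalerAl linearZ /mul_formmx mxE -tnth_nth.
have phi_x y : phi (x * y) = 0.
  rewrite -(coordsK y) mulr_sumr linear_sum big1 // => j _.
  by rewrite -scalerAr linearZ -tnth_nth phi_xe; apply: mulr0.
have x_eq0 : x = 0.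
  by apply: contraNeq phi_x0 => x_neq0; rewrite -[x0](mulVKf x_neq0) phi_x.
by rewrite -(vecofK v) -/x x_eq0 linear0.
Qed.

Lemma gram_unit : gram F \in unitmx.
Proof. by apply: (mul_formmx_unit (x0 := 1)); rewrite /= trF1 pnatr_eq0 -lt0n deg_gt0. Qed.

Lemma row_trmx_mulmx_of i0 lam :
  delta_mx 0 i0 *m (mulmx_of lam)^T = coords lam *m mul_formmx (coord e i0).
Proof.
apply/rowP => j; rewrite -rowE !mxE -{1}(coordsK lam) mulr_suml linear_sum.
by apply: eq_bigr => i _; rewrite !mxE -scalerAl linearZ -tnth_nth.
Qed.

Definition Lambda1v : {vspace 'M[rat]_g} :=
  (\bigcap_(i < g) lker (linfun (mulmx (mulmx_of (tnth e i))^T)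
                        - linfun (mulmxr (mulmx_of (tnth e i)))))%VS.

Lemma memv_Lambda1 L : L \in Lambda1v <-> Lambda1 L.
Proof.
rewrite memvE; split => [/subv_bigcapP L_ker lam | L_comm].
  rewrite -(coordsK lam) /lact /ract !linear_sum mulmx_suml.
  apply: eq_bigr => i _; rewrite !linearZ /= -scalemxAl; congr (_ *: _).
  have := L_ker i isT; rewrite -memvE memv_ker add_lfunE opp_lfunE !lfunE /= subr_eq0.
  by rewrite -tnth_nth => /eqP.
apply/subv_bigcapP => i _; rewrite -memvE memv_ker add_lfunE opp_lfunE !lfunE /= subr_eq0.
by apply/eqP/L_comm.
Qed.

Lemma dim_Lambda1_le : (\dim Lambda1v <= g)%N.
Proof.
pose i0 := Ordinal deg_gt0; pose u : 'rV[rat]_g := delta_mx 0 i0.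
have K_unit : mul_formmx (coord e i0) \in unitmx.
  apply: (mul_formmx_unit (x0 := tnth e i0)).
  by rewrite /= (tnth_nth 0) coord_free ?(basis_free ebasisP) ?eqxx ?oner_eq0.
(* Row [i0] determines [L] in Lambda^1, as [u *m (mulmx_of lam)^T *m L = u *m L *m
   mulmx_of lam] and the rows [u *m (mulmx_of lam)^T] exhaust ['rV_g]. *)
have row_inj : (Lambda1v :&: lker (linfun (mulmx u)) = 0)%VS.
  apply/eqP; rewrite -subv0; apply/subvP => L /memv_capP [/memv_Lambda1 L_comm].
  rewrite memv_ker lfunE /= memv0 => /eqP uL0; apply/eqP/row_matrixP => i.
  pose lam := passmx.vecof e (delta_mx 0 i *m invmx (mul_formmx (coord e i0))).
  have -> : row i L = u *m (mulmx_of lam)^T *m L.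
    by rewrite row_trmx_mulmx_of vecofK mulmxKV // -rowE.
  by rewrite -mulmxA [_ *m L]L_comm mulmxA uL0 mul0mx row0.
rewrite -(limg_dim_eq row_inj); apply: leq_trans (dimvS (subvf _)) _.
by rewrite dimvf dim_matrix mul1r.
Qed.

End NumberField.

Section TracePairing.
Variable F : fieldExtType rat.
Local Notation g := (deg F).
Local Notation G := (gram F).

Lemma gram_sym : G^T = G.
Proof. by apply/matrixP => i j; rewrite !mxE mulrC. Qed.

Lemma tpairE (A B : 'M[rat]_g) : tpair A B = \tr (A^T *m G *m B *m G).
Proof.
symmetry; rewrite /tpair /mxtrace [in RHS]exchange_big /=; apply: eq_bigr => j _.
rewrite mxE.
under [LHS]eq_bigr => l _ do rewrite mxE big_distrl.
under [LHS]eq_bigr => l _ do under eq_bigr => k _ do rewrite mxE !big_distrl.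
symmetry.
under eq_bigr => i _ do rewrite exchange_big.
rewrite exchange_big; apply: eq_bigr => l _.
rewrite exchange_big; apply: eq_bigr => k _; apply: eq_bigr => i _.
by rewrite -[in X in _ * X]gram_sym !mxE (mulrAC (A i j)).
Qed.

Fact tpair_is_bilinear : bilinear_for *%R *%R (@tpair F).
Proof.
split=> [B a A A' | A a B B']; rewrite /= !tpairE.
  by rewrite linearP /= !mulmxDl -!scalemxAl mxtraceD mxtraceZ.
by rewrite mulmxDr mulmxDl -scalemxAr -scalemxAl mxtraceD mxtraceZ.
Qed.
HB.instance Definition _ :=
  bilinear_isBilinear.Build rat 'M[rat]_g 'M[rat]_g rat *%R *%R (@tpair F) tpair_is_bilinear.

Lemma tpair_represents (phi : {linear 'M[rat]_g -> rat^o}) :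
  exists A, forall B, tpair A B = phi B.
Proof.
have [D phiE] := mxtrace_linear_rep phi.
exists (invmx G *m D *m invmx G)^T => B; rewrite phiE tpairE trmxK.
rewrite -!mulmxA (mulmxA (invmx G) G) mulVmx ?gram_unit // mul1mx.
by rewrite mxtrace_mulC -!mulmxA mulmxV ?gram_unit // mulmx1.
Qed.

End TracePairing.

Section Tensors.
Variable F : fieldExtType rat.
Local Notation e := (ebasis F).

Lemma tensZ a b (x y : F) : tens (a *: x) (b *: y) = (a * b) *: tens x y.
Proof. by rewrite /tens !linearZ /= -scalemxAl scalerA mulrC. Qed.

Lemma tens_ebasis i j : tens (tnth e i) (tnth e j) = delta_mx i j.
Proof. by rewrite /tens !coords_ebasis trmx_delta mul_delta_mx. Qed.

Lemma mxtrace_tens_self (x : F) : \tr (tens x x) = \sum_i coords x 0 i ^+ 2.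
Proof. by apply: eq_bigr => i _; rewrite mxE big_ord1 !mxE expr2. Qed.

Lemma mxtrace_tens_self_ge0 (x : F) : 0 <= \tr (tens x x).
Proof. by rewrite mxtrace_tens_self sumr_ge0 // => i _; rewrite sqr_ge0. Qed.

Lemma mxtrace_tens_self_eq0 (x : F) : \tr (tens x x) = 0 -> x = 0.
Proof.
rewrite mxtrace_tens_self => /eqP; rewrite psumr_eq0 => [/allP x0|i _]; last exact: sqr_ge0.
rewrite -(coordsK x); apply/eqP; rewrite passmx.vecof_eq0 ?ebasisP //; apply/eqP/rowP => i.
by have := x0 i (mem_index_enum i); rewrite /= sqrf_eq0 => /eqP ->; rewrite mxE.
Qed.

End Tensors.

Section Stratum.
Variables (F : fieldExtType rat) (G : wgraph F).
Local Notation g := (deg F).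
Local Notation wt := (@wt F G).

Definition stratum_span : {vspace 'M[rat]_g} :=
  <<[seq tens (wt h) (wt h) | h : 'I_(nH G)]>>%VS.

Lemma Nstr_ann A : Nstr G A <-> A \in ann (@tpair F) stratum_span.
Proof.
split=> [A_N | /memv_ann_span A_ann h]; last by apply: A_ann; apply: map_f; rewrite mem_enum.
by apply/memv_ann_span => _ /mapP [h _ ->]; apply: A_N.
Qed.

Lemma AnnL1_ann A : AnnL1 A <-> A \in ann (@tpair F) (Lambda1v F).
Proof.
split=> [A_L | /memv_ann A_ann L /memv_Lambda1]; last exact: A_ann.
by apply/memv_ann => L /memv_Lambda1; apply: A_L.
Qed.

Lemma admissible_cap_neq0 :
  admissible G -> (exists h, wt h != 0) -> (stratum_span :&: Lambda1v F != 0)%VS.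
Proof.
move=> adm [h0 wt_h0]; apply/negP => /eqP cap0.
pose p := daddv_pi stratum_span (Lambda1v F).
have [A A_tr] := tpair_represents (mxtrace \o p).
have p_self h : p (tens (wt h) (wt h)) = tens (wt h) (wt h).
  by apply: daddv_pi_id cap0 _; apply/memv_span/map_f; rewrite mem_enum.
have A_N : Nstr G A.
  apply: adm => [h | L /memv_Lambda1 L_Lam]; rewrite A_tr /=.
    by rewrite p_self mxtrace_tens_self_ge0.
  by rewrite daddv_pi_eq0 // mxtrace0.
move: wt_h0; have := A_N h0; rewrite A_tr /= p_self.
by move=> /mxtrace_tens_self_eq0 ->; rewrite eqxx.
Qed.

End Stratum.

Section SpanDim.
Variable F : fieldExtType rat.
Local Notation V := 'M[rat]_(deg F).

Lemma span_dim_uniq (P : V -> Prop) a b : span_dim P a -> span_dim P b -> a = b.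
Proof.
move=> [[s [sP [s_free <-]]] a_max] [[t [tP [t_free <-]]] b_max].
by apply/eqP; rewrite eqn_leq b_max // a_max.
Qed.

Lemma span_dim_scaled (P Q : V -> Prop) (U : {vspace V}) :
  (forall A, P A <-> A \in U /\ Q A) ->
  (forall A, exists2 c : rat, c != 0 & Q (c *: A)) ->
  span_dim P (\dim U).
Proof.
move=> PE Q_scaled; pose b := vbasis U.
split=> [|s sP s_free]; last first.
  by rewrite -(eqP s_free); apply/dimvS/span_subvP => A /sP /PE [].
have [c c_neq0 c_Q] := @fin_all_exists2 _ (fun=> rat) (fun _ c => c != 0)
  (fun i c => Q (c *: tnth b i)) (fun i => Q_scaled (tnth b i)).
exists [tuple c i *: tnth b i | i < \dim U]; split; last split; last exact: size_tuple.
  move=> A /tnthP [i ->]; rewrite tnth_mktuple; apply/PE; split; last exact: c_Q.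
  by rewrite memvZ // vbasis_mem ?mem_tnth.
apply/freeP => k k_sum i.
have /freeP b_free := basis_free (vbasisP U).
have kc_i : k i * c i = 0.
  apply: (b_free (fun j => k j * c j)); rewrite -[RHS]k_sum; apply: eq_bigr => j _.
  by rewrite -scalerA nth_mktuple (tnth_nth 0).
by move/eqP: kc_i; rewrite mulf_eq0 (negbTE (c_neq0 i)) orbF => /eqP.
Qed.

End SpanDim.

Section DualLattice.
Variables (F : fieldExtType rat) (I : F -> Prop) (b : (deg F).-tuple F).
Hypothesis I_span : forall x, I x <-> zspan (fun i => tnth b i) x.
Local Notation g := (deg F).
Local Notation e := (ebasis F).

Lemma prod_denq_mulr_int (T : finType) (q : T -> rat) t :
  (\prod_s denq (q s))%:~R * q t \is a Num.int.
Proof.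
rewrite (bigD1 t) //= intrM mulrAC (mulrC (denq (q t))%:~R) -numqE.
by rewrite rpredM ?intr_int.
Qed.

Lemma dual_latticeZ (z : int) x : dual_lattice I x -> dual_lattice I (z%:~R *: x).
Proof. by move=> x_dual y Iy; rewrite -scalerAl linearZ rpredM ?intr_int ?x_dual. Qed.

Lemma dual_lattice_denq x :
  dual_lattice I ((\prod_i denq (trF (x * tnth b i)))%:~R *: x).
Proof.
move=> y /I_span [c ->]; rewrite mulr_sumr linear_sum rpred_sum // => i _.
rewrite -scalerAr -scalerAl !linearZ /= rpredM ?intr_int //.
exact: (prod_denq_mulr_int (fun i => trF (x * tnth b i))).
Qed.

Lemma dual_lattice_ebasis_multiple :
  exists2 D : int, D != 0 & forall i, dual_lattice I (D%:~R *: tnth e i).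
Proof.
pose d x := \prod_i denq (trF (x * tnth b i)).
exists (\prod_i d (tnth e i)).
  by apply/prodf_neq0 => i _; apply/prodf_neq0 => j _; apply: denq_neq0.
move=> i; rewrite (bigD1 i) //= mulrC intrM -scalerA.
exact/dual_latticeZ/dual_lattice_denq.
Qed.

Lemma SZ_multiple A : exists2 c : rat, c != 0 & SZ I (c *: A).
Proof.
have [D D_neq0 De_dual] := dual_lattice_ebasis_multiple.
pose E := \prod_(p : 'I_g * 'I_g) denq (A p.1 p.2).
pose z p := Num.floor (E%:~R * A p.1 p.2).
have zE p : (z p)%:~R = E%:~R * A p.1 p.2.
  by apply/eqP; rewrite -intrEfloor (prod_denq_mulr_int (fun p => A p.1 p.2)).
exists (E%:~R * D%:~R * D%:~R).
  by rewrite !mulf_neq0 ?intr_eq0 //; apply/prodf_neq0 => p _; apply: denq_neq0.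
exists [seq ((z p)%:~R *: (D%:~R *: tnth e p.1), D%:~R *: tnth e p.2) | p <- index_enum _].
split=> [_ /mapP [p _ ->] | ]; first by split=> /=; [apply: dual_latticeZ |]; apply: De_dual.
suff -> : (E%:~R * D%:~R * D%:~R) *: A =
          \sum_p tens ((z p)%:~R *: (D%:~R *: tnth e p.1)) (D%:~R *: tnth e p.2).
  by rewrite big_map subrr /altt trmx0 oppr0.
rewrite {1}(matrix_sum_delta A) pair_bigA scaler_sumr; apply: eq_bigr => p _.
rewrite scalerA tensZ tens_ebasis scalerA zE; congr (_ *: _); ring.
Qed.

End DualLattice.

Section CharacterLattices.
Variables (F : fieldExtType rat) (I : F -> Prop) (G : wgraph F).
Hypothesis I_lattice : is_lattice I.

Lemma exists_wt_neq0 : (forall x, I x <-> zspan (@wt F G) x) -> exists h, @wt F G h != 0.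
Proof.
move=> I_wt; have [b [b_free I_b]] := I_lattice.
pose i0 := Ordinal (deg_gt0 F).
have b_neq0 : tnth b i0 != 0 by rewrite (free_not0 b_free) ?mem_tnth.
have /I_wt [c b_wt] : I (tnth b i0).
  apply/I_b; exists (fun i => (i == i0)%:Z); rewrite (bigD1 i0) //= big1 ?addr0 ?scale1r //.
  by move=> i /negbTE ->; rewrite scale0r.
case: (pickP (fun h => @wt F G h != 0)) => [h ? | wt0]; first by exists h.
move: b_neq0; rewrite b_wt big1 ?eqxx // => h _.
by move/negbFE/eqP: (wt0 h) => ->; rewrite scaler0.
Qed.

Lemma span_dim_charX : span_dim (charX I G) (\dim (ann (@tpair F) (stratum_span G))).
Proof.
have [b [_ I_b]] := I_lattice; apply: span_dim_scaled (SZ_multiple I_b) => A.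
by split=> [[/Nstr_ann]|[/Nstr_ann]].
Qed.

Lemma span_dim_charX' : span_dim (charX' I G)
  (\dim (ann (@tpair F) (stratum_span G) :&: ann (@tpair F) (Lambda1v F))).
Proof.
have [b [_ I_b]] := I_lattice; apply: span_dim_scaled (SZ_multiple I_b) => A.
split=> [[/Nstr_ann A_N [/AnnL1_ann A_L A_SZ]] | [/memv_capP [/Nstr_ann ? /AnnL1_ann ?] ?]] //.
by split=> //; apply/memv_capP.
Qed.

End CharacterLattices.

Theorem proposition3p4 (F : fieldExtType rat) (I : F -> Prop) (G : wgraph F) (d : nat) :
  totally_real F ->
  is_lattice I ->
  I_weighted_stable I (deg F) G ->
  admissible G ->
  RMtorus_dim I G d ->
  (d <= deg F - 1)%N.
Proof.
move=> _ I_lattice [_ _ _ _ [_ _ _ I_wt]] adm.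
case=> rX [rX' [[dX [da [X_dim [alt_dim ->]]]] [[dX' [da' [X'_dim [alt_dim' ->]]]] ->]]].
rewrite (span_dim_uniq alt_dim' alt_dim).
rewrite (span_dim_uniq X_dim (span_dim_charX G I_lattice)).
rewrite (span_dim_uniq X'_dim (span_dim_charX' G I_lattice)).
have := dim_ann_cap_lt (@tpair F) (admissible_cap_neq0 adm (exists_wt_neq0 I_lattice I_wt)).
have := dim_Lambda1_le F.
(* [set] identifies two occurrences of this dimension that differ in their instances. *)
set L := \dim (Lambda1v F).
lia.
Qed.
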